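(* Let $G$ be an $(n,n,p_s,p_d)$-two-island network with groups $V_1,V_2$, and let the dual opinions evolve according to the dynamics in the context with common bias $b>0$, common resilience $\phi\in(0,1)$, and the symmetric initial condition $x_i(0)=x_0\in(\tfrac12,1)$, $y_i(0)=y_0\in[\tfrac12,x_0]$ for $i\in V_1$, $x_j(0)=1-x_0$, $y_j(0)=1-y_0$ for $j\in V_2$. Let $i\in V_1$. If there exists $k_x$ such that $x_i(t)$ is monotonic for all $t>k_x$, then there exists $k>k_x$ such that $y_i(t)$ is monotonic for all $t>k$, and both $x_i(t)$ and $y_i(t)$ converge as $t\to\infty$.
   Context: Let $n\ge 1$ and $p_s,p_d\in(0,1)$ with $p_s>p_d$ and $np_s,np_d$ positive integers. An $(n,n,p_s,p_d)$-two-island network is an undirected graph (no self-loops) with vertex set $V=V_1\cup V_2$, $V_1\cap V_2=\emptyset$, $|V_1|=|V_2|=n$, such that each node of $V_1$ has exactly $np_s$ neighbours in $V_1$ and $np_d$ neighbours in $V_2$, and each node of $V_2$ has exactly $np_s$ neighbours in $V_2$ and $np_d$ neighbours in $V_1$. Let $w_{ij}\in\{0,1\}$ be the adjacency matrix, $N_i$ the set of neighbours of $i$, and $d_i=\sum_{j\in N_i}w_{ij}$. Dual opinions dynamics: each $i\in V$ has $x_i(t),y_i(t)\in[0,1]$, $t=0,1,2,\dots$, updated by $$x_i(t+1)=\frac{x_i(t)^{b}s_i(t)}{x_i(t)^{b}s_i(t)+(1-x_i(t))^{b}(d_i-s_i(t))},\qquad y_i(t+1)=\phi\, x_i(t+1)+(1-\phi)\hat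 y_{i,avg}(t),$$ with $s_i(t)=\sum_{j\in N_i}w_{ij}y_j(t)$ and $\hat y_{i,avg}(t)=\sum_{j\in N_i}\frac{w_{ij}}{d_i}y_j(t)$. *)

From HB Require Import structures.
From mathcomp Require Import all_boot all_order all_algebra.
From mathcomp Require Import all_classical all_reals all_analysis.
Set Implicit Arguments. Unset Strict Implicit. Unset Printing Implicit Defensive.
Import Order.TTheory GRing.Theory Num.Theory.
Local Open Scope ring_scope.

(* Undirected simple graph on a finite vertex type T: symmetric irreflexive
   relation e (w_ij = 1 iff e i j). Neighbour set N_i, degree d_i = |N_i|. *)
Definition simple_graph (T : finType) (e : rel T) : Prop :=
  (forall i j, e i j = e j i) /\ (forall i, ~~ e i i).

Definition nbrs (T : finType) (e : rel T) (i : T) : {set T} := [set j | e i j].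

Definition deg (T : finType) (e : rel T) (i : T) : nat := #|nbrs e i|.

Definition two_island (R : realType) (T : finType) (e : rel T) (V1 V2 : {set T})
  (n : nat) (ps pd : R) : Prop :=
  simple_graph e /\ (1 <= n)%N /\
  0 < pd /\ pd < ps /\ ps < 1 /\
  [disjoint V1 & V2] /\ V1 :|: V2 = [set: T] /\
  #|V1| = n /\ #|V2| = n /\
  exists ks kd : nat, (0 < ks)%N /\ (0 < kd)%N /\
    n%:R * ps = ks%:R /\ n%:R * pd = kd%:R /\
    (forall i, i \in V1 ->
       #|[set j in V1 | e i j]| = ks /\ #|[set j in V2 | e i j]| = kd) /\
    (forall i, i \in V2 ->
       #|[set j in V2 | e i j]| = ks /\ #|[set j in V1 | e i j]| = kd).

Definition s_sum (R : realType) (T : finType) (e : rel T) (y : T -> R) (i : T) : R :=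
  \sum_(j in nbrs e i) y j.

Definition dual_dynamics (R : realType) (T : finType) (e : rel T) (b phi : R)
  (x y : nat -> T -> R) : Prop :=
  forall (t : nat) (i : T),
    let s := s_sum e (y t) i in
    let d := (deg e i)%:R in
    x t.+1 i = (x t i `^ b) * s /
               ((x t i `^ b) * s + ((1 - x t i) `^ b) * (d - s)) /\
    y t.+1 i = phi * x t.+1 i + (1 - phi) * (s / d).

Definition monotone_after (R : realType) (u : nat -> R) (k : nat) : Prop :=
  (forall t, (k < t)%N -> u t <= u t.+1) \/
  (forall t, (k < t)%N -> u t.+1 <= u t).

From HB Require Import structures.
From mathcomp Require Import all_boot all_order all_algebra.
From mathcomp Require Import all_classical all_reals all_analysis.
From mathcomp Require Import zify ring lra.
Set Implicit Arguments. Unset Strict Implicit. Unset Printing Implicit Defensive.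
Import Order.TTheory GRing.Theory Num.Theory.
Import numFieldNormedType.Exports.
Local Open Scope ring_scope.

(* Since both islands have the same internal and external degrees and start
   from mirror-image opinions, the state stays mirror-symmetric: every node of
   V1 holds (X t, Y t) and every node of V2 holds (1 - X t, 1 - Y t), because
   the biased x-update commutes with c |-> 1 - c.  The neighbour average seen
   from V1 is then an affine function of Y t with slope (ks - kd)/(ks + kd),
   so the increments satisfy
     dY (t+1) = phi dX (t+1) + (1 - phi) (ks - kd)/(ks + kd) dY t,
   with nonnegative coefficients since p_s > p_d.  Once dX keeps a sign, dY
   either takes that sign at some time and keeps it from then on, or has it
   throughout; so Y is eventually monotone, and bounded monotone sequences
   converge. *)

Lemma monotone_afterN (R : realType) (u : nat -> R) k :
  monotone_after (fun t => - u t) k <-> monotone_after u k.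
Proof.
by split=> -[m|m]; [right|left|right|left] => t /m; rewrite ?lerN2.
Qed.

Section LinearRecurrence.
Variables (R : realType) (X Y : nat -> R) (a phi : R).
Hypotheses (a_ge0 : 0 <= a) (phi_ge0 : 0 <= phi).
Hypothesis increment_rec :
  forall t, Y t.+2 - Y t.+1 = phi * (X t.+2 - X t.+1) + a * (Y t.+1 - Y t).

Lemma recurrence_nondecreasing_from k t0 :
  (forall t, (k < t)%N -> X t <= X t.+1) -> (k < t0)%N -> Y t0 <= Y t0.+1 ->
  forall t, (t0 <= t)%N -> Y t <= Y t.+1.
Proof.
move=> X_up lt_kt0 Y_up0 t /subnK <-; elim: (t - t0)%N => [//|m IH].
rewrite addSn; have := increment_rec (m + t0).
have : X (m + t0).+1 <= X (m + t0).+2 by apply: X_up; lia.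
move=> dX; have : 0 <= phi * (X (m + t0).+2 - X (m + t0).+1).
  by apply: mulr_ge0; rewrite // subr_ge0.
have : 0 <= a * (Y (m + t0).+1 - Y (m + t0)).
  by apply: mulr_ge0; rewrite // subr_ge0.
lra.
Qed.

Lemma recurrence_monotone_after_up k :
  (forall t, (k < t)%N -> X t <= X t.+1) ->
  exists k', (k < k')%N /\ monotone_after Y k'.
Proof.
move=> X_up.
have [[t0 [lt_kt0 Y_up0]]|no_up] :=
  pselect (exists t0, (k < t0)%N /\ Y t0 <= Y t0.+1).
  exists t0; split=> //; left => t /ltnW.
  exact: (recurrence_nondecreasing_from X_up lt_kt0 Y_up0).
exists k.+1; split=> //; right => t lt_kt; apply/ltW; rewrite ltNge.
by apply/negP => Y_up; apply: no_up; exists t; split => //; lia.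
Qed.

End LinearRecurrence.

Lemma recurrence_monotone_after (R : realType) (X Y : nat -> R) (a phi : R) k :
  0 <= a -> 0 <= phi ->
  (forall t, Y t.+2 - Y t.+1 = phi * (X t.+2 - X t.+1) + a * (Y t.+1 - Y t)) ->
  monotone_after X k -> exists k', (k < k')%N /\ monotone_after Y k'.
Proof.
move=> a_ge0 phi_ge0 rec [X_up|X_down].
  exact: (recurrence_monotone_after_up a_ge0 phi_ge0 rec X_up).
have recN t : - Y t.+2 - - Y t.+1 =
    phi * (- X t.+2 - - X t.+1) + a * (- Y t.+1 - - Y t).
  by have := rec t; lra.
have [|k' [lt_kk' mY]] := recurrence_monotone_after_up (X := fun t => - X t)
  (Y := fun t => - Y t) a_ge0 phi_ge0 recN (k := k).
  by move=> t /X_down; rewrite lerN2.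
by exists k'; split => //; apply/monotone_afterN.
Qed.

Definition biased_update (R : realType) (b X a : R) : R :=
  X `^ b * a / (X `^ b * a + (1 - X) `^ b * (1 - a)).

Lemma biased_update_rescale (R : realType) (b X s d : R) : d != 0 ->
  X `^ b * s / (X `^ b * s + (1 - X) `^ b * (d - s)) = biased_update b X (s / d).
Proof.
move=> d_neq0; rewrite /biased_update.
have -> : X `^ b * (s / d) + (1 - X) `^ b * (1 - s / d) =
          (X `^ b * s + (1 - X) `^ b * (d - s)) / d by field.
by rewrite invf_div !mulrA divfK.
Qed.

Section BiasedUpdate.
Variables (R : realType) (b X a : R).
Hypotheses (X_gt0 : 0 < X) (X_lt1 : X < 1) (a_gt0 : 0 < a) (a_lt1 : a < 1).

Let num_gt0 : 0 < X `^ b * a.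
Proof. by rewrite mulr_gt0 ?powR_gt0. Qed.

Let rest_gt0 : 0 < (1 - X) `^ b * (1 - a).
Proof. by rewrite mulr_gt0 ?powR_gt0 ?subr_gt0. Qed.

Lemma biased_update_gt0 : 0 < biased_update b X a.
Proof. by rewrite divr_gt0 ?addr_gt0. Qed.

Lemma biased_update_lt1 : biased_update b X a < 1.
Proof. by rewrite ltr_pdivrMr ?addr_gt0 // mul1r ltrDl. Qed.

Lemma biased_updateC : biased_update b (1 - X) (1 - a) = 1 - biased_update b X a.
Proof.
rewrite /biased_update !subKr [_ + X `^ b * a]addrC.
by field; rewrite lt0r_neq0 ?addr_gt0.
Qed.

End BiasedUpdate.

Lemma convex_comb_in01 (R : realFieldType) (l u a : R) :
  0 <= l -> l <= 1 -> 0 <= u -> u <= 1 -> 0 <= a -> a <= 1 ->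
  0 <= l * u + (1 - l) * a <= 1.
Proof. by move=> *; apply/andP; split; nra. Qed.

Definition island_avg (R : realFieldType) (ks kd : nat) (c : R) : R :=
  (c * ks%:R + (1 - c) * kd%:R) / (ks + kd)%:R.

Section IslandAverage.
Variables (R : realFieldType) (ks kd : nat).
Hypotheses (ks_gt0 : (0 < ks)%N) (kd_gt0 : (0 < kd)%N).

Lemma island_avg_gt0 (c : R) : 0 <= c <= 1 -> 0 < island_avg ks kd c.
Proof.
move=> /andP[c_ge0 c_le1]; have ks' : (0 : R) < ks%:R by rewrite ltr0n.
have kd' : (0 : R) < kd%:R by rewrite ltr0n.
rewrite divr_gt0 ?ltr0n ?addn_gt0 ?ks_gt0 //; nra.
Qed.

Lemma island_avgC (c : R) : island_avg ks kd (1 - c) = 1 - island_avg ks kd c.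
Proof.
have : (ks + kd)%:R != 0 :> R by rewrite pnatr_eq0 -lt0n addn_gt0 ks_gt0.
by rewrite /island_avg natrD => ?; field.
Qed.

Lemma island_avg_lt1 (c : R) : 0 <= c <= 1 -> island_avg ks kd c < 1.
Proof.
move=> c01; rewrite -subr_gt0 -island_avgC island_avg_gt0 //.
by move: c01 => /andP[? ?]; apply/andP; split; lra.
Qed.

Lemma island_avgB (c c' : R) :
  island_avg ks kd c' - island_avg ks kd c =
  (ks%:R - kd%:R) / (ks + kd)%:R * (c' - c).
Proof. by rewrite /island_avg; ring. Qed.

End IslandAverage.

Definition mirror (T : finType) (R : ringType) (V : {set T}) (c : R) (j : T) : R :=
  if j \in V then c else 1 - c.

Lemma mirror_eq (T : finType) (R : ringType) (V : {set T}) (c : R) (u : T -> R) :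
  (forall j, j \in V -> u j = c) -> (forall j, j \notin V -> u j = 1 - c) ->
  u =1 mirror V c.
Proof. by move=> u_in u_out j; rewrite /mirror; case: ifP => [/u_in|/negbT/u_out]. Qed.

Lemma setC_disjoint_cover (T : finType) (V1 V2 : {set T}) :
  [disjoint V1 & V2] -> V1 :|: V2 = [set: T] -> V2 = ~: V1.
Proof.
move=> disj cover; apply/setP => j; rewrite inE.
have : j \in V1 :|: V2 by rewrite cover inE.
by rewrite inE; case: (boolP (j \in V1)) => [/(disjointFr disj)->|].
Qed.

Section NeighbourSums.
Variables (T : finType) (e : rel T) (V : {set T}).

Lemma deg_split i :
  deg e i = (#|[set j in V | e i j]| + #|[set j in ~: V | e i j]|)%N.
Proof.
rewrite /deg -(cardsID V (nbrs e i)).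
by congr (_ + _)%N; apply: eq_card => j; rewrite !inE andbC.
Qed.

Lemma s_sum_mirror (R : realType) (c : R) i :
  s_sum e (mirror V c) i =
  c * #|[set j in V | e i j]|%:R + (1 - c) * #|[set j in ~: V | e i j]|%:R.
Proof.
rewrite /s_sum (bigID (mem V)) /= !mulr_natr -!sumr_const.
congr (_ + _); apply: eq_big => j; rewrite ?inE /mirror.
- by rewrite andbC.
- by case/andP=> _ ->.
- by rewrite andbC.
- by case/andP=> _ /negbTE->.
Qed.

End NeighbourSums.

Lemma two_island_degrees (R : realType) (T : finType) (e : rel T) (V1 V2 : {set T})
    (n : nat) (ps pd : R) :
  two_island e V1 V2 n ps pd ->
  V2 = ~: V1 /\ exists ks kd : nat, [/\ (0 < ks)%N, (0 < kd)%N, (kd <= ks)%N,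
    (forall i, i \in V1 ->
       #|[set j in V1 | e i j]| = ks /\ #|[set j in ~: V1 | e i j]| = kd) &
    (forall i, i \notin V1 ->
       #|[set j in ~: V1 | e i j]| = ks /\ #|[set j in V1 | e i j]| = kd)].
Proof.
move=> [_ [_ [_ [pd_lt_ps [_ [disj [cover [_ [_ island]]]]]]]]].
have V2E := setC_disjoint_cover disj cover; split=> //; subst V2.
have [ks [kd [ks_gt0 [kd_gt0 [n_ps [n_pd [card_in card_out]]]]]]] := island.
exists ks, kd; split=> // [|i iV]; last by apply: card_out; rewrite inE.
by rewrite -(ler_nat R) -n_ps -n_pd ler_wpM2l ?ler0n ?ltW.
Qed.

Local Open Scope classical_set_scope.

Lemma monotone_after_bounded_cvg (R : realType) (u : nat -> R) k m M :
  monotone_after u k -> (forall t, m <= u t <= M) -> exists l : R, u @ \oo --> l.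
Proof.
move=> mono bnd.
suff /cvg_ex[/= l ul] : cvgn (fun t => u (t + k.+1)%N).
  by exists l; rewrite -(cvg_shiftn k.+1).
case: mono => mono.
  apply: nondecreasing_is_cvgn.
    by apply/nondecreasing_seqP => t; rewrite addSn; apply: mono; lia.
  by exists M => _ [t _ <-]; case/andP: (bnd (t + k.+1)%N).
apply: nonincreasing_is_cvgn.
  by apply/nonincreasing_seqP => t; rewrite addSn; apply: mono; lia.
by exists m => _ [t _ <-]; case/andP: (bnd (t + k.+1)%N).
Qed.

Section IslandDynamics.
Variables (R : realType) (T : finType) (e : rel T) (V : {set T}) (ks kd : nat).
Variables (b phi : R) (x y : nat -> T -> R).
Hypotheses (ks_gt0 : (0 < ks)%N) (kd_gt0 : (0 < kd)%N).
Hypothesis card_in : forall i, i \in V ->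
  #|[set j in V | e i j]| = ks /\ #|[set j in ~: V | e i j]| = kd.
Hypothesis card_out : forall i, i \notin V ->
  #|[set j in ~: V | e i j]| = ks /\ #|[set j in V | e i j]| = kd.
Hypotheses (phi_ge0 : 0 <= phi) (phi_le1 : phi <= 1).
Hypothesis dynamics : dual_dynamics e b phi x y.

Lemma deg_island i : deg e i = (ks + kd)%N.
Proof.
rewrite (deg_split e V); have [/card_in|/card_out] := boolP (i \in V).
  by case=> -> ->.
by case=> -> ->; rewrite addnC.
Qed.

Lemma avg_mirror (c : R) i :
  s_sum e (mirror V c) i / (deg e i)%:R = mirror V (island_avg ks kd c) i.
Proof.
rewrite s_sum_mirror deg_island /mirror; case: ifP => [/card_in|/negbT/card_out].
  by case=> -> ->.
by case=> -> ->; rewrite -island_avgC // /island_avg addnC; congr (_ / _); ring.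
Qed.

Lemma dynamics_avg t j :
  x t.+1 j = biased_update b (x t j) (s_sum e (y t) j / (deg e j)%:R) /\
  y t.+1 j = phi * x t.+1 j + (1 - phi) * (s_sum e (y t) j / (deg e j)%:R).
Proof.
have [-> ->] := dynamics t j; split=> //.
by rewrite biased_update_rescale // deg_island pnatr_eq0 -lt0n addn_gt0 ks_gt0.
Qed.

Lemma mirror_step t (X Y : R) : 0 < X < 1 -> 0 <= Y <= 1 ->
  x t =1 mirror V X -> y t =1 mirror V Y ->
  x t.+1 =1 mirror V (biased_update b X (island_avg ks kd Y)) /\
  y t.+1 =1 mirror V (phi * biased_update b X (island_avg ks kd Y) +
                      (1 - phi) * island_avg ks kd Y).
Proof.
move=> /andP[X_gt0 X_lt1] Y01 x_t y_t.
have avg_t j : s_sum e (y t) j / (deg e j)%:R = mirror V (island_avg ks kd Y) j.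
  by rewrite -avg_mirror /s_sum (eq_bigr _ (fun j _ => y_t j)).
have a_gt0 := island_avg_gt0 ks_gt0 kd_gt0 Y01.
have a_lt1 := island_avg_lt1 ks_gt0 kd_gt0 Y01.
have x_next j : x t.+1 j = mirror V (biased_update b X (island_avg ks kd Y)) j.
  have [-> _] := dynamics_avg t j; rewrite avg_t x_t /mirror.
  by case: ifP => // _; rewrite biased_updateC.
split=> // j; have [_ ->] := dynamics_avg t j.
by rewrite avg_t x_next /mirror; case: ifP => // _; ring.
Qed.

Variable i : T.
Hypothesis iV : i \in V.
Variables (x0 y0 : R).
Hypotheses (x0_gt0 : 0 < x0) (x0_lt1 : x0 < 1) (y0_ge0 : 0 <= y0) (y0_le1 : y0 <= 1).
Hypotheses (x_init : x 0%N =1 mirror V x0) (y_init : y 0%N =1 mirror V y0).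

Lemma mirror_invariant t :
  [/\ 0 < x t i < 1, 0 <= y t i <= 1,
      x t =1 mirror V (x t i) & y t =1 mirror V (y t i)].
Proof.
elim: t => [|t [X01 Y01 x_t y_t]].
  by rewrite x_init y_init /mirror iV x0_gt0 x0_lt1 y0_ge0 y0_le1.
have [x_next y_next] := mirror_step X01 Y01 x_t y_t.
rewrite [x t.+1 i]x_next [y t.+1 i]y_next /mirror iV.
have /andP[X_gt0 X_lt1] := X01.
have a_gt0 := island_avg_gt0 ks_gt0 kd_gt0 Y01.
have a_lt1 := island_avg_lt1 ks_gt0 kd_gt0 Y01.
have u_gt0 := biased_update_gt0 b X_gt0 X_lt1 a_gt0 a_lt1.
have u_lt1 := biased_update_lt1 b X_gt0 X_lt1 a_gt0 a_lt1.
split=> //; first by rewrite u_gt0 u_lt1.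
by rewrite convex_comb_in01 ?phi_ge0 ?phi_le1 ?ltW.
Qed.

Lemma island_increment_rec t :
  y t.+2 i - y t.+1 i = phi * (x t.+2 i - x t.+1 i) +
    (1 - phi) * ((ks%:R - kd%:R) / (ks + kd)%:R) * (y t.+1 i - y t i).
Proof.
have y_next s : y s.+1 i = phi * x s.+1 i + (1 - phi) * island_avg ks kd (y s i).
  have [_ _ _ y_s] := mirror_invariant s.
  have [_ ->] := dynamics_avg s i.
  by rewrite /s_sum (eq_bigr _ (fun j _ => y_s j)) avg_mirror /mirror iV.
rewrite (y_next t.+1) (y_next t) -mulrA -island_avgB; ring.
Qed.

Hypothesis kd_le_ks : (kd <= ks)%N.

Lemma island_opinions_cvg kx : monotone_after (fun t => x t i) kx ->
  (exists k : nat, (kx < k)%N /\ monotone_after (fun t => y t i) k) /\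
  (exists lx : R, (fun t => x t i) @ \oo --> lx) /\
  (exists ly : R, (fun t => y t i) @ \oo --> ly).
Proof.
move=> mono_x.
have coef_ge0 : 0 <= (1 - phi) * ((ks%:R - kd%:R) / (ks + kd)%:R).
  by rewrite mulr_ge0 ?divr_ge0 ?subr_ge0 ?ler_nat.
have [k [lt_kxk mono_y]] :=
  recurrence_monotone_after coef_ge0 phi_ge0 island_increment_rec mono_x.
have x_bnd t : 0 <= x t i <= 1.
  by have [/andP[? ?] _ _ _] := mirror_invariant t; rewrite !ltW.
have y_bnd t : 0 <= y t i <= 1 by have [] := mirror_invariant t.
split; first by exists k.
by split; [exact: (monotone_after_bounded_cvg mono_x x_bnd)
          | exact: (monotone_after_bounded_cvg mono_y y_bnd)].
Qed.

End IslandDynamics.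

Theorem lemmaB4 (R : realType) (T : finType) (e : rel T) (V1 V2 : {set T})
  (n : nat) (ps pd b phi x0 y0 : R) (x y : nat -> T -> R) :
  two_island e V1 V2 n ps pd ->
  0 < b -> 0 < phi -> phi < 1 ->
  1 / 2 < x0 -> x0 < 1 -> 1 / 2 <= y0 -> y0 <= x0 ->
  (forall i, i \in V1 -> x 0%N i = x0 /\ y 0%N i = y0) ->
  (forall j, j \in V2 -> x 0%N j = 1 - x0 /\ y 0%N j = 1 - y0) ->
  dual_dynamics e b phi x y ->
  forall (i : T), i \in V1 ->
  forall kx : nat, monotone_after (fun t => x t i) kx ->
  (exists k : nat, (kx < k)%N /\ monotone_after (fun t => y t i) k) /\
  (exists lx : R, (fun t => x t i) @ \oo --> lx) /\
  (exists ly : R, (fun t => y t i) @ \oo --> ly).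
Proof.
move=> /two_island_degrees[-> [ks [kd [ks_gt0 kd_gt0 kd_le_ks card_in card_out]]]].
move=> _ phi_gt0 phi_lt1 x0_gt x0_lt1 y0_ge y0_le init_in init_out dyn i iV.
have x_init : x 0%N =1 mirror V1 x0.
  apply: mirror_eq => j jV; first by case: (init_in j jV).
  by case: (init_out j); rewrite ?inE.
have y_init : y 0%N =1 mirror V1 y0.
  apply: mirror_eq => j jV; first by case: (init_in j jV).
  by case: (init_out j); rewrite ?inE.
apply: (island_opinions_cvg ks_gt0 kd_gt0 card_in card_out _ _ dyn iV _ _ _ _
  x_init y_init kd_le_ks); lra.
Qed.
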